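(* Let $A$ be a square, let $O_A$ be any operator supported on $A$, let $C=b_2(A)$, and suppose that the size of $C$ is at most $L^*$. Then: (i) $P_C O_A P_C=cP_C$ for some complex number $c$; (ii) all states $\psi$ with $P_C\psi=\psi$ have the same reduced density matrix on $A$, which equals the reduced density matrix on $A$ of any ground state of $H_0$ (i.e. any $\psi$ with $P\psi=\psi$); (iii) $\|O_AP\|=\|O_AP_C\|$.
   Context: Lattice: $\Lambda=\mathbb Z_L\times\mathbb Z_L$ with periodic boundary conditions; each site carries a qudit of fixed finite dimension and $\mathcal H=\bigotimes_{u\in\Lambda}\mathcal H_u$. $\mathcal S(r)$ is the set of all $r\times r$ square blocks of $\Lambda$. An operator is supported on $A$ if it acts as the identity outside $A$. $H_0=\sum_{A\in\mathcal S(2)}Q_A$ with $Q_A$ pairwise commuting projectors supported on $A$; $P=\prod_{A\in\mathcal S(2)}(I-Q_A)\ne0$ is the projector onto the (zero-energy) ground space of $H_0$. For a square $B\in\mathcal S(r)$, $r\ge2$: $P_B=\prod_{A\in\mathcal S(2),A\subseteq B}(I-Q_A)$, $Q_B=I-P_B$. For a square $A$ and integer $l\ge1$, $b_l(A)$ denotes the square consisting of $A$ together with all its first, second, …, $l$-th neighbours (the ''ball'' of distance $l$ around $A$). It is assumed that $H_0$ satisfies, for some integer $L^*$: TQO-1: for every $A\in\mathcal S(r)$ with $r\le L^*$ and every operator $O_A$ supported on $A$, $PO_AP=cP$ for some $c\in\mathbb C$. TQO-2: for every $A\in\mathcal S(r)$ with $r\le L^*$, with $B\in\mathcal S(r+2)$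 the square containing $A$ and all nearest neighbours of $A$, every operator $O_A$ supported on $A$ with $O_AP=0$ satisfies $O_AP_B=0$. *)

From HB Require Import structures.
From mathcomp Require Import all_boot all_order all_algebra.
Set Implicit Arguments. Unset Strict Implicit. Unset Printing Implicit Defensive.
Import Order.TTheory GRing.Theory Num.Theory.
Local Open Scope ring_scope.

(* Sites of the periodic lattice Z_L x Z_L. *)
Definition site (L : nat) := ('I_L * 'I_L)%type.

(* Computational-basis configurations: each site carries a qudit of dimension d.
   H = tensor product of C^d over sites has orthonormal basis indexed by cfg. *)
Definition cfg (L d : nat) := {ffun site L -> 'I_d}.

Definition dimH (L d : nat) : nat := #|{: cfg L d}|.

Definition opE (C : numClosedFieldType) (L d : nat) (O : 'M[C]_(dimH L d))
  (x y : cfg L d) : C := O (enum_rank x) (enum_rank y).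

Definition vecE (C : numClosedFieldType) (L d : nat) (v : 'cV[C]_(dimH L d))
  (x : cfg L d) : C := v (enum_rank x) 0.

(* The r x r square with lower-left corner (i,j) (coordinates taken mod L). *)
Definition sq (L : nat) (i j : int) (r : nat) : {set site L} :=
  [set u : site L | ((((nat_of_ord u.1)%:Z - i) %% (L%:Z))%Z < r%:Z)
                 && ((((nat_of_ord u.2)%:Z - j) %% (L%:Z))%Z < r%:Z)].

Definition squares (L r : nat) : {set {set site L}} :=
  [set sq L (nat_of_ord i)%:Z (nat_of_ord j)%:Z r | i : 'I_L, j : 'I_L].

(* b_l(A) for the square A = sq L i j r : the square of all sites at
   distance <= l (including diagonal neighbours) of A. *)
Definition ball (L : nat) (i j : int) (r l : nat) : {set site L} :=
  sq L (i - l%:Z) (j - l%:Z) (r + 2 * l).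

(* O is supported on A: O = O_A (x) I_{complement of A}, i.e. its matrix
   elements vanish unless x,y agree outside A, and then depend only on the
   restrictions of x,y to A. *)
Definition supported_on (C : numClosedFieldType) (L d : nat) (A : {set site L})
  (O : 'M[C]_(dimH L d)) : Prop :=
  (forall x y : cfg L d, (exists u, u \notin A /\ x u <> y u) -> opE O x y = 0)
  /\ (forall x y x' y' : cfg L d,
        (forall u, u \in A -> x u = x' u /\ y u = y' u) ->
        (forall u, u \notin A -> x u = y u /\ x' u = y' u) ->
        opE O x y = opE O x' y').

Definition adjmx (C : numClosedFieldType) m n (M : 'M[C]_(m, n)) : 'M[C]_(n, m) :=
  (map_mx Num.conj M)^T.

Definition PB (C : numClosedFieldType) (L d : nat)
  (Q : {set site L} -> 'M[C]_(dimH L d)) (B : {set site L}) : 'M[C]_(dimH L d) :=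
  \big[mulmx/1%:M]_(A in squares L 2 | A \subset B) (1%:M - Q A).

(* P = prod_{A in S(2)} (I - Q_A), projector onto the ground space of H_0. *)
Definition Ptot (C : numClosedFieldType) (L d : nat)
  (Q : {set site L} -> 'M[C]_(dimH L d)) : 'M[C]_(dimH L d) :=
  \big[mulmx/1%:M]_(A in squares L 2) (1%:M - Q A).

Definition vnorm2 (C : numClosedFieldType) n (v : 'cV[C]_n) : C :=
  \sum_i `|v i 0| ^+ 2.

Definition is_opnorm (C : numClosedFieldType) m n (M : 'M[C]_(m, n)) (nrm : C) : Prop :=
  0 <= nrm
  /\ (forall v : 'cV[C]_n, vnorm2 (M *m v) <= nrm ^+ 2 * vnorm2 v)
  /\ (forall t : C, 0 <= t ->
        (forall v : 'cV[C]_n, vnorm2 (M *m v) <= t ^+ 2 * vnorm2 v) -> nrm <= t).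

Definition glue (L d : nat) (A : {set site L}) (y e : cfg L d) : cfg L d :=
  [ffun u => if u \in A then y u else e u].

(* Reduced density matrix of |psi> on A:
   rho_A(a,b) = sum_e psi(a,e) conj(psi(b,e)),
   with A-configurations a,b represented by full configurations x,y
   (only their restriction to A matters). *)
Definition rdm (C : numClosedFieldType) (L d : nat) (A : {set site L})
  (psi : 'cV[C]_(dimH L d)) (x y : cfg L d) : C :=
  \sum_(e : cfg L d | [forall u in A, e u == x u])
     vecE psi e * Num.conj (vecE psi (glue A y e)).

Definition TQO1 (C : numClosedFieldType) (L d Lstar : nat)
  (Q : {set site L} -> 'M[C]_(dimH L d)) : Prop :=
  forall (i j : int) (r : nat), (0 < r)%N -> (r <= Lstar)%N ->
  forall O : 'M[C]_(dimH L d), supported_on (sq L i j r) O ->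
  exists c : C, Ptot Q *m O *m Ptot Q = c *: Ptot Q.

Definition TQO2 (C : numClosedFieldType) (L d Lstar : nat)
  (Q : {set site L} -> 'M[C]_(dimH L d)) : Prop :=
  forall (i j : int) (r : nat), (0 < r)%N -> (r <= Lstar)%N ->
  forall O : 'M[C]_(dimH L d), supported_on (sq L i j r) O ->
  O *m Ptot Q = 0 -> O *m PB Q (ball L i j r 1) = 0.

From HB Require Import structures.
From mathcomp Require Import all_boot all_order all_algebra perm zify.
Set Implicit Arguments. Unset Strict Implicit. Unset Printing Implicit Defensive.
Import Order.TTheory GRing.Theory Num.Theory.
Local Open Scope ring_scope.

(* Let P be the ground-space projector, A the square carrying O, B = b_1(A) and C = b_2(A).
   By TQO-1, X := O - c satisfies P X P = 0 for some c. The dressed operator Z := P_B X P_B is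
   supported on B; it absorbs every factor I - Q_A' with A' inside B and commutes with all the
   other factors, which are disjoint from A. Hence Z P = P Z P = P X P = 0, so TQO-2 applied to Z
   on B gives Z P_C = 0, and P_C X P_C = P_C Z P_C = 0, which is (i). Reduced density matrices on A
   are expectations of operators supported on A, so by (i) they are constant on the range of P_C,
   which contains the ground space: this is (ii). Applying (i) to O^* O gives
   ||O P_C||^2 = c = ||O P||^2, which is (iii). *)

Section CommutingIdempotents.
Variables (R : pzRingType) (I : eqType) (pT : predType I) (S : pT) (F : I -> R).
Hypothesis F_idem : {in S, forall a, F a * F a = F a}.
Hypothesis F_comm : {in S &, forall a b, GRing.comm (F a) (F b)}.

Lemma commr_prodF b s : b \in S -> {subset s <= S} ->
  GRing.comm (F b) (\prod_(a <- s) F a).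
Proof. by move=> Sb sS; rewrite big_seq; apply: commr_prod => a /sS; apply: F_comm. Qed.

Lemma commr_prodF2 s t : {subset s <= S} -> {subset t <= S} ->
  GRing.comm (\prod_(a <- s) F a) (\prod_(a <- t) F a).
Proof.
move=> sS tS; rewrite [X in GRing.comm _ X]big_seq; apply: commr_prod => a /tS ta.
exact/commr_sym/commr_prodF.
Qed.

Lemma mulr_prodF_absorb a s : a \in s -> {subset s <= S} ->
  F a * \prod_(c <- s) F c = \prod_(c <- s) F c.
Proof.
elim: s => // b s IHs; rewrite inE big_cons => /predU1P[-> | as_] sS.
  by rewrite mulrA F_idem // sS ?mem_head.
have sS' : {subset s <= S} by move=> c cs; apply: sS; rewrite inE cs orbT.
by rewrite mulrA F_comm ?sS ?mem_head ?inE ?as_ ?orbT // -mulrA IHs.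
Qed.

Lemma mulr_prodF_subl s t : {subset s <= t} -> {subset t <= S} ->
  \prod_(a <- s) F a * \prod_(a <- t) F a = \prod_(a <- t) F a.
Proof.
elim: s => [|a s IHs] st tS; first by rewrite big_nil mul1r.
have st' : {subset s <= t} by move=> c cs; apply: st; rewrite inE cs orbT.
by rewrite big_cons -mulrA IHs // mulr_prodF_absorb // st ?mem_head.
Qed.

Lemma mulr_prodF_subr s t : {subset s <= t} -> {subset t <= S} ->
  \prod_(a <- t) F a * \prod_(a <- s) F a = \prod_(a <- t) F a.
Proof.
move=> st tS; have sS : {subset s <= S} by move=> a /st; apply: tS.
by rewrite (commr_prodF2 tS sS) mulr_prodF_subl.
Qed.

Lemma prodF_idem s : {subset s <= S} ->
  \prod_(a <- s) F a * \prod_(a <- s) F a = \prod_(a <- s) F a.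
Proof. exact: mulr_prodF_subl. Qed.

(* [Z] passes through the factors outside and is absorbed by the ones inside, hence
   [P Z = Z P_out] with [P_out] the product of the outside factors, and [P_out P = P]. *)
Lemma prodF_sandwich (inside : pred I) (Z : R) s : {subset s <= S} ->
  (forall a, a \in s -> inside a -> F a * Z = Z) ->
  (forall a, a \in s -> ~~ inside a -> GRing.comm (F a) Z) ->
  \prod_(a <- s) F a * Z * \prod_(a <- s) F a = Z * \prod_(a <- s) F a.
Proof.
move=> sS Fin Fout.
have prodF_Z : \prod_(a <- s) F a * Z = Z * \prod_(a <- s | ~~ inside a) F a.
  elim: s sS Fin Fout => [|a s IHs] sS Fin Fout; first by rewrite !big_nil mul1r mulr1.
  have sub : forall c, c \in s -> c \in a :: s by move=> c cs; rewrite inE cs orbT.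
  rewrite !big_cons -mulrA IHs; first last.
  - by move=> c /sub; apply: Fout.
  - by move=> c /sub; apply: Fin.
  - by move=> c /sub; apply: sS.
  case: ifPn => [/(Fout a (mem_head a s)) FZ | /negbNE /(Fin a (mem_head a s)) FZ].
    by rewrite !mulrA FZ.
  by rewrite mulrA FZ.
rewrite prodF_Z -mulrA -big_filter mulr_prodF_subl // => a.
by rewrite mem_filter => /andP[].
Qed.

End CommutingIdempotents.

Section Support.
Variables (C : numClosedFieldType) (L d : nat).
Local Notation T := (cfg L d).
Local Notation n := (dimH L d).
Implicit Types (M N : 'M[C]_n) (x y z : T) (A B : {set site L}).

Lemma sum_cfg (f : 'I_n -> C) : \sum_(k < n) f k = \sum_(z : T) f (enum_rank z).
Proof. by rewrite (reindex (@enum_rank T)) //=; apply: onW_bij; exact: enum_rank_bij. Qed.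

Lemma opEM M N x y : opE (M *m N) x y = \sum_z opE M x z * opE N z y.
Proof. by rewrite /opE mxE sum_cfg. Qed.

Lemma opE_ext M N : (forall x y, opE M x y = opE N x y) -> M = N.
Proof.
move=> MN; apply/matrixP => i j; rewrite -(enum_valK i) -(enum_valK j); exact: MN.
Qed.

Lemma opE1 x y : opE (1%:M : 'M[C]_n) x y = (x == y)%:R.
Proof. by rewrite /opE mxE (inj_eq enum_rank_inj). Qed.

Lemma opED M N x y : opE (M + N) x y = opE M x y + opE N x y.
Proof. by rewrite /opE mxE. Qed.

Lemma opEN M x y : opE (- M) x y = - opE M x y.
Proof. by rewrite /opE mxE. Qed.

Lemma opEZ (c : C) M x y : opE (c *: M) x y = c * opE M x y.
Proof. by rewrite /opE mxE. Qed.

Lemma opE_adj M x y : opE (adjmx M) x y = Num.conj (opE M y x).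
Proof. by rewrite /opE /adjmx !mxE. Qed.

Lemma cfg_neq x y : x != y -> exists u, x u != y u.
Proof.
move=> nxy; apply/existsP; apply: contraNT nxy => /existsPn xy.
by apply/eqP/ffunP => u; apply/eqP; move: (xy u); rewrite negbK.
Qed.

Definition agree_off A x y := [forall u, (u \notin A) ==> (x u == y u)].

Lemma agree_offP A x y : reflect (forall u, u \notin A -> x u = y u) (agree_off A x y).
Proof.
apply: (iffP forallP) => [xy u uA | xy u]; first by move: (xy u); rewrite uA => /eqP.
by apply/implyP => uA; rewrite xy.
Qed.

Lemma agree_offPn A x y : reflect (exists2 u, u \notin A & x u != y u) (~~ agree_off A x y).
Proof.
apply: (iffP forallPn) => [[u] | [u uA nxy]]; last by exists u; rewrite negb_imply uA.
by rewrite negb_imply => /andP[uA nxy]; exists u.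
Qed.

Lemma supported_on_eq0 A M x y u :
  supported_on A M -> u \notin A -> x u != y u -> opE M x y = 0.
Proof. by case=> M0 _ uA nxy; apply: M0; exists u; split=> //; apply/eqP. Qed.

Lemma supported_on_agree A M x y :
  supported_on A M -> ~~ agree_off A x y -> opE M x y = 0.
Proof. by move=> sM /agree_offPn[u uA nxy]; apply: supported_on_eq0 sM uA nxy. Qed.

Lemma supported_on1 A : supported_on A (1%:M : 'M[C]_n).
Proof.
split=> [x y [u [_ nxy]] | x y x' y' onA offA]; rewrite !opE1.
  by case: eqP => // xy; case: nxy; rewrite xy.
suff -> : (x == y) = (x' == y') by [].
apply/eqP/eqP => xy; apply/ffunP => u.
  have [uA | uA] := boolP (u \in A); last exact: (offA u uA).2.
  by rewrite -(onA u uA).1 -(onA u uA).2 xy.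
have [uA | uA] := boolP (u \in A); last exact: (offA u uA).1.
by rewrite (onA u uA).1 (onA u uA).2 xy.
Qed.

Lemma supported_onD A M N : supported_on A M -> supported_on A N -> supported_on A (M + N).
Proof.
move=> [M0 ME] [N0 NE]; split=> [x y xy | x y x' y' onA offA].
  by rewrite opED M0 // N0 // addr0.
by rewrite !opED (ME x y x' y') // (NE x y x' y').
Qed.

Lemma supported_onN A M : supported_on A M -> supported_on A (- M).
Proof.
move=> [M0 ME]; split=> [x y xy | x y x' y' onA offA].
  by rewrite opEN M0 // oppr0.
by rewrite !opEN (ME x y x' y').
Qed.

Lemma supported_onZ A (c : C) M : supported_on A M -> supported_on A (c *: M).
Proof.
move=> [M0 ME]; split=> [x y xy | x y x' y' onA offA].
  by rewrite opEZ M0 // mulr0.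
by rewrite !opEZ (ME x y x' y').
Qed.

Lemma supported_on_adj A M : supported_on A M -> supported_on A (adjmx M).
Proof.
move=> [M0 ME]; split=> [x y [u [uA nxy]] | x y x' y' onA offA].
  by rewrite opE_adj M0 ?conjC0 //; exists u; split=> // yx; apply: nxy.
rewrite !opE_adj (ME y x y' x') // => u uA.
  by case: (onA u uA).
by case: (offA u uA).
Qed.

Lemma supported_onS A B M : A \subset B -> supported_on A M -> supported_on B M.
Proof.
move=> AB sM; split=> [x y [u [uB nxy]] | x y x' y' onB offB].
  by apply: (supported_on_eq0 (u := u) sM); [apply: contra uB; apply: subsetP | apply/eqP].
have agree_off_transfer x1 y1 x2 y2 :
    (forall u, u \in B -> x1 u = x2 u /\ y1 u = y2 u) ->
    (forall u, u \notin B -> x2 u = y2 u) ->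
    agree_off A x1 y1 -> agree_off A x2 y2.
  move=> on12 off2 /agree_offP xy1; apply/agree_offP => u uA.
  have [uB | uB] := boolP (u \in B); last exact: off2.
  by have [<- <-] := on12 u uB; apply: xy1.
have [xy | nxy] := boolP (agree_off A x y); last first.
  have nxy' : ~~ agree_off A x' y'.
    apply: contra nxy; apply: agree_off_transfer => u uB; last exact: (offB u uB).1.
    by have [-> ->] := onB u uB.
  by rewrite !(supported_on_agree sM).
have /agree_offP xy' : agree_off A x' y'.
  by apply: agree_off_transfer xy => // u uB; exact: (offB u uB).2.
move/agree_offP: xy => xy.
case: sM => _ ME; apply: ME => u uA; last by split; [apply: xy | apply: xy'].
by apply: onB; apply: (subsetP AB).
Qed.

(* Exchanging the values of [x] and [x'] off [A] carries the configurations agreeing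
   with [x] off [A] bijectively onto those agreeing with [x'] off [A]. *)
Definition swap_off A x x' z : T :=
  [ffun u => if u \in A then z u else tperm (x u) (x' u) (z u)].

Lemma swap_offK A x x' : involutive (swap_off A x x').
Proof.
by move=> z; apply/ffunP => u; rewrite !ffunE; case: (u \in A); rewrite ?tpermK.
Qed.

Lemma supported_onM A M N : supported_on A M -> supported_on A N -> supported_on A (M *m N).
Proof.
move=> sM sN; split=> [x y [u [uA nxy]] | x y x' y' onA offA].
  rewrite opEM big1 // => z _; have [xz | nxz] := eqVneq (x u) (z u).
    by rewrite (supported_on_eq0 sN uA) ?mulr0 // -xz; apply/eqP.
  by rewrite (supported_on_eq0 sM uA) ?mul0r.
rewrite !opEM [RHS](reindex_inj (can_inj (swap_offK A x x'))) /=.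
apply: eq_bigr => z _; have [/agree_offP xz | /agree_offPn[u uA nxz]] := boolP (agree_off A x z).
  have zE u : u \notin A -> swap_off A x x' z u = x' u.
    by move=> uA; rewrite ffunE (negbTE uA) -xz // tpermL.
  case: sM sN => [_ ME] [_ NE]; congr (_ * _).
    apply: ME => u uA; last by split; [apply: xz | rewrite zE].
    by rewrite ffunE uA; split=> //; case: (onA u uA).
  apply: NE => u uA; last by rewrite zE // -xz //; apply: offA.
  by rewrite ffunE uA; split=> //; case: (onA u uA).
rewrite (supported_on_eq0 sM uA nxz) (supported_on_eq0 sM uA (x := x')) ?mul0r //.
by rewrite ffunE (negbTE uA) -{1}(tpermL (x u) (x' u)) (inj_eq perm_inj).
Qed.

Lemma opEM_disjoint A B M N x y : [disjoint A & B] ->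
  supported_on A M -> supported_on B N ->
  opE (M *m N) x y = opE M x (glue A y x) * opE N (glue A y x) y.
Proof.
move=> AB sM sN; rewrite opEM (big_only1 (glue A y x)) // => z /cfg_neq[u] + _.
rewrite ffunE; case: ifP => uA nzu.
  by rewrite (supported_on_eq0 sN _ nzu) ?mulr0 // (disjointFr AB uA).
by rewrite (supported_on_eq0 (u := u) sM) ?mul0r ?uA // eq_sym.
Qed.

Lemma supported_on_disjoint_comm A B M N : [disjoint A & B] ->
  supported_on A M -> supported_on B N -> M *m N = N *m M.
Proof.
move=> AB sM sN; apply: opE_ext => x y.
rewrite (opEM_disjoint _ _ AB sM sN) (opEM_disjoint _ _ _ sN sM); last by rewrite disjoint_sym.
set z := glue A y x; set w := glue B y x.
have [/agree_offP xy | /agree_offPn[u]] := boolP (agree_off (A :|: B) x y); last first.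
  rewrite inE negb_or => /andP[uA uB] nxy.
  rewrite (supported_on_eq0 sN uB (y := y) (x := z)) ?ffunE ?(negbTE uA) //.
  by rewrite (supported_on_eq0 sM uA (y := y) (x := w)) ?ffunE ?(negbTE uB) ?mulr0 ?mul0r.
have xy' u : u \notin A -> u \notin B -> x u = y u.
  by move=> uA uB; apply: xy; rewrite inE negb_or uA uB.
case: sM sN => [_ ME] [_ NE]; rewrite mulrC; congr (_ * _).
  apply: NE => u uB; rewrite !ffunE ?uB ?(disjointFl AB uB) //.
  by rewrite (negbTE uB); split=> //; case: ifP => // /negbT uA; apply: xy'.
apply: ME => u uA; rewrite !ffunE ?uA ?(disjointFr AB uA) //.
by rewrite (negbTE uA); split=> //; case: ifP => // /negbT uB; apply: xy'.
Qed.

End Support.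

Section Geometry.
Variable L : nat.
Hypothesis L_gt0 : (0 < L)%N.

Lemma modz_le (m : int) : 0 <= m -> (m %% L)%Z <= m.
Proof.
move=> m_ge0; have [mL | Lm] := ltP m L%:Z; first by rewrite modz_small ?m_ge0.
by apply/ltW/(lt_le_trans _ Lm)/ltz_pmod; rewrite ltz_nat.
Qed.

(* The coordinate [c] lies in the cyclic interval [a, a + r) of Z_L iff [(c - a) mod L < r]. *)
Lemma cyclic_interval_widen (c a : int) (r k : nat) :
  ((c - a) %% L)%Z < r%:Z -> ((c - (a - k%:Z)) %% L)%Z < (r + 2 * k)%N%:Z.
Proof.
move=> ca_lt; rewrite opprB addrCA addrC -modzDml.
have m_ge0 : 0 <= ((c - a) %% L)%Z by apply: modz_ge0; rewrite eqz_nat -lt0n.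
by apply: le_lt_trans (modz_le _) _; lia.
Qed.

Lemma cyclic_interval_adjacent (u v i a : int) (r : nat) :
  ((u - i) %% L)%Z < r%:Z -> ((u - a) %% L)%Z < 2%:Z -> ((v - a) %% L)%Z < 2%:Z ->
  ((v - (i - 1)) %% L)%Z < (r + 2)%N%:Z.
Proof.
set p := ((u - i) %% L)%Z; set t := ((u - a) %% L)%Z; set s := ((v - a) %% L)%Z.
move=> p_lt t_lt s_lt.
have [p_ge0 t_ge0 s_ge0] : [/\ 0 <= p, 0 <= t & 0 <= s].
  by split; apply: modz_ge0; rewrite eqz_nat -lt0n.
have -> : v - (i - 1) =
    (((v - a) %/ L)%Z - ((u - a) %/ L)%Z + ((u - i) %/ L)%Z) * L + (s - t + (p + 1)).
  by have := divz_eq (v - a) L; have := divz_eq (u - a) L; have := divz_eq (u - i) L; lia.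
by rewrite modzMDl; apply: le_lt_trans (modz_le _) _; lia.
Qed.

Lemma sq_sub_ball (i j : int) (r k : nat) : sq L i j r \subset ball L i j r k.
Proof.
apply/subsetP => u; rewrite !inE => /andP[u1 u2].
by apply/andP; split; apply: cyclic_interval_widen.
Qed.

Lemma square2_meet_sub_ball1 (i j : int) (r : nat) (A : {set site L}) :
  A \in squares L 2 -> ~~ [disjoint A & sq L i j r] -> A \subset ball L i j r 1.
Proof.
case/imset2P => p q _ _ -> /pred0Pn[u /andP[]].
rewrite !inE => /andP[ua1 ua2] /andP[uA1 uA2].
apply/subsetP => v; rewrite !inE muln1 => /andP[va1 va2].
by apply/andP; split; apply: cyclic_interval_adjacent; eassumption.
Qed.

End Geometry.

Lemma ball_ball (L : nat) (i j : int) (r k l : nat) :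
  ball L (i - k%:Z) (j - k%:Z) (r + 2 * k) l = ball L i j r (k + l).
Proof. by rewrite /ball -!addrA -!opprD -PoszD mulnDr addnA. Qed.

Section HilbertSpace.
Variable C : numClosedFieldType.

Lemma adjmxM m n p (A : 'M[C]_(m, n)) (B : 'M[C]_(n, p)) :
  adjmx (A *m B) = adjmx B *m adjmx A.
Proof. by rewrite /adjmx map_mxM trmx_mul. Qed.

Lemma adjmxB m n (A B : 'M[C]_(m, n)) : adjmx (A - B) = adjmx A - adjmx B.
Proof. by rewrite /adjmx map_mxB linearB. Qed.

Lemma adjmx1 n : adjmx (1%:M : 'M[C]_n) = 1%:M.
Proof. by rewrite /adjmx map_mx1 trmx1. Qed.

Lemma vnorm2E n (v : 'cV[C]_n) : vnorm2 v = (adjmx v *m v) 0 0.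
Proof. by rewrite /vnorm2 mxE; apply: eq_bigr => i _; rewrite /adjmx !mxE normCKC. Qed.

Lemma vnorm2_ge0 n (v : 'cV[C]_n) : 0 <= vnorm2 v.
Proof. by apply: sumr_ge0 => i _; rewrite exprn_ge0. Qed.

Lemma vnorm2_eq0 n (v : 'cV[C]_n) : vnorm2 v = 0 -> v = 0.
Proof.
move=> v0; apply/matrixP => i j; rewrite ord1 mxE.
have /eqP := psumr_eq0P (fun i _ => exprn_ge0 2 (normr_ge0 (v i 0))) v0 (i := i) isT.
by rewrite expf_eq0 /= normr_eq0 => /eqP.
Qed.

Definition orthoproj n (P : 'M[C]_n) := P *m P = P /\ adjmx P = P.

Lemma orthoproj_vnorm2 n (P : 'M[C]_n) (v : 'cV[C]_n) :
  orthoproj P -> vnorm2 (P *m v) = (adjmx v *m P *m v) 0 0.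
Proof. by case=> PP Padj; rewrite vnorm2E adjmxM Padj -mulmxA (mulmxA P) PP mulmxA. Qed.

Lemma orthoproj_vnorm2_le n (P : 'M[C]_n) (v : 'cV[C]_n) :
  orthoproj P -> vnorm2 (P *m v) <= vnorm2 v.
Proof.
move=> [PP Padj]; have P'proj : orthoproj (1%:M - P).
  by rewrite /orthoproj adjmxB adjmx1 Padj mulmxBl mul1mx mulmxBr mulmx1 PP subrr subr0.
have -> : vnorm2 v = vnorm2 (P *m v) + vnorm2 ((1%:M - P) *m v).
  have entryD (a b : 'M[C]_1) : (a + b) 0 0 = a 0 0 + b 0 0 by rewrite mxE.
  rewrite !orthoproj_vnorm2 // -entryD -!mulmxA -mulmxDr -mulmxDl addrC subrK mul1mx.
  by rewrite vnorm2E.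
by rewrite lerDl vnorm2_ge0.
Qed.

Lemma orthoproj_expectation n (P M : 'M[C]_n) (c : C) (psi : 'cV[C]_n) :
  orthoproj P -> P *m M *m P = c *: P -> P *m psi = psi ->
  (adjmx psi *m M *m psi) 0 0 = c * vnorm2 psi.
Proof.
move=> [_ Padj] PMP Ppsi.
have psiP : adjmx psi *m P = adjmx psi by rewrite -{1}Padj -adjmxM Ppsi.
have -> : adjmx psi *m M *m psi = adjmx psi *m (P *m M *m P) *m psi.
  by rewrite -{1}psiP -{2}Ppsi !mulmxA.
by rewrite PMP -scalemxAr -scalemxAl mxE psiP vnorm2E.
Qed.

Lemma orthoproj_fixed_vector n (P : 'M[C]_n) :
  orthoproj P -> P != 0 -> exists2 w : 'cV[C]_n, P *m w = w & 0 < vnorm2 w.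
Proof.
move=> [PP _] /eqP P_neq0.
have /existsP[i /existsP[j Pij]] : [exists i, exists j, P i j != 0].
  apply: contra_notT P_neq0 => /existsPn P0; apply/matrixP => i j; rewrite mxE.
  by move/existsPn: (P0 i) => /(_ j)/negPn/eqP.
exists (col j P); first by rewrite colE mulmxA PP.
rewrite lt_def vnorm2_ge0 andbT; apply/eqP => /vnorm2_eq0/matrixP/(_ i 0).
by rewrite !mxE; apply/eqP.
Qed.

(* [P (O^* O) P = c P] makes [O P] a multiple [sqrt c] of an isometry on the range of [P]. *)
Lemma opnorm_orthoproj n (O P : 'M[C]_n) (c : C) : orthoproj P -> P != 0 ->
  P *m (adjmx O *m O) *m P = c *: P -> is_opnorm (O *m P) (sqrtC c).
Proof.
move=> Pproj P_neq0 PNP.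
have OP_vnorm2 v : vnorm2 (O *m P *m v) = c * vnorm2 (P *m v).
  rewrite -(orthoproj_expectation Pproj PNP); last by rewrite mulmxA (proj1 Pproj).
  by rewrite vnorm2E !adjmxM !mulmxA.
have [w Pw w_gt0] := orthoproj_fixed_vector Pproj P_neq0.
have c_ge0 : 0 <= c.
  by rewrite -(pmulr_lge0 _ w_gt0) -{1}Pw -OP_vnorm2 vnorm2_ge0.
split; first by rewrite sqrtC_ge0.
split=> [v | t t_ge0 bound].
  by rewrite -mulmxA (mulmxA O) OP_vnorm2 sqrtCK ler_wpM2l // orthoproj_vnorm2_le.
have := bound w; rewrite -mulmxA (mulmxA O) OP_vnorm2 Pw ler_pM2r // => ct.
by rewrite -(sqrCK t_ge0) ler_sqrtC // qualifE /= exprn_ge0.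
Qed.

End HilbertSpace.

Section ReducedDensity.
Variables (C : numClosedFieldType) (L d : nat).
Local Notation T := (cfg L d).
Local Notation n := (dimH L d).

(* |y_A><x_A| tensored with the identity off A. *)
Definition rdm_op (A : {set site L}) (x y : T) : 'M[C]_n :=
  \matrix_(k, l) ([forall u in A, (enum_val l : T) u == x u]
                  && ((enum_val k : T) == glue A y (enum_val l)))%:R.

Lemma opE_rdm_op (A : {set site L}) (x y w z : T) :
  opE (rdm_op A x y) w z = ([forall u in A, z u == x u] && (w == glue A y z))%:R.
Proof. by rewrite /opE mxE !enum_rankK. Qed.

Lemma eq_glue (A : {set site L}) (y w z : T) : (forall u, u \notin A -> w u = z u) ->
  (w == glue A y z) = [forall u in A, w u == y u].
Proof.
move=> wz; apply/eqP/forall_inP => [-> u uA | wy]; first by rewrite ffunE uA.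
apply/ffunP => u; rewrite ffunE; case: ifPn => uA; [exact/eqP/wy | exact: wz].
Qed.

Lemma supported_on_rdm_op (A : {set site L}) (x y : T) : supported_on A (rdm_op A x y).
Proof.
split=> [w z [u [uA nwz]] | w z w' z' onA offA]; rewrite !opE_rdm_op.
  by case: eqP => [wE|]; [case: nwz; rewrite wE ffunE (negbTE uA) | rewrite andbF].
rewrite !eq_glue => [|u /offA[] //|u /offA[] //].
have onA1 u : u \in A -> (z u == x u) = (z' u == x u) by case/onA=> _ ->.
have onA2 u : u \in A -> (w u == y u) = (w' u == y u) by case/onA=> -> _.
by rewrite (eq_forallb_in onA1) (eq_forallb_in onA2).
Qed.

Lemma rdm_expectation (A : {set site L}) (psi : 'cV[C]_n) (x y : T) :
  rdm A psi x y = (adjmx psi *m rdm_op A x y *m psi) 0 0.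
Proof.
rewrite mxE sum_cfg /rdm big_mkcond /=; apply: eq_bigr => z _.
rewrite mxE sum_cfg (bigD1 (glue A y z)) //= big1 ?addr0 => [|w /negbTE nw].
  rewrite /adjmx !mxE !enum_rankK eqxx andbT /vecE.
  by case: [forall u in A, z u == x u]; rewrite ?mulr0 ?mul0r // mulr1 mulrC.
by rewrite /adjmx !mxE !enum_rankK nw andbF mulr0.
Qed.

End ReducedDensity.

Section FrustrationFree.
Variables (C : numClosedFieldType) (L d Lstar : nat).
Variable Q : {set site L} -> 'M[C]_(dimH L d).
Hypothesis L_gt0 : (0 < L)%N.
Hypothesis Q_proj : forall A, A \in squares L 2 ->
  [/\ Q A *m Q A = Q A, adjmx (Q A) = Q A & supported_on A (Q A)].
Hypothesis Q_comm : forall A B, A \in squares L 2 -> B \in squares L 2 ->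
  Q A *m Q B = Q B *m Q A.

Local Notation n := (dimH L d).
Local Notation sq2 := (squares L 2).
Implicit Types A B : {set site L}.

Definition gsproj A : 'M[C]_n := 1%:M - Q A.

Lemma gsproj_idem : {in sq2, forall A, gsproj A * gsproj A = gsproj A}.
Proof.
move=> A /Q_proj[QQ _ _].
by rewrite -mulmxE /gsproj mulmxBl mul1mx mulmxBr mulmx1 QQ subrr subr0.
Qed.

Lemma gsproj_comm : {in sq2 &, forall A B, GRing.comm (gsproj A) (gsproj B)}.
Proof.
move=> A B SA SB; rewrite /GRing.comm -mulmxE /gsproj.
rewrite !mulmxBl !mul1mx !mulmxBr !mulmx1 Q_comm //.
by rewrite !opprB !addrA [LHS]addrAC [RHS]addrAC (addrAC 1%:M).
Qed.

Definition squares_in B := [seq A <- index_enum {set site L} | (A \in sq2) && (A \subset B)].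

Lemma squares_in_sub B : {subset squares_in B <= sq2}.
Proof. by move=> A; rewrite mem_filter => /andP[/andP[]]. Qed.

Lemma PB_prod B : PB Q B = \prod_(A <- squares_in B) gsproj A.
Proof. by rewrite /PB big_filter. Qed.

Lemma Ptot_PB : Ptot Q = PB Q [set: site L].
Proof. by apply: eq_bigl => A; rewrite subsetT andbT. Qed.

Lemma gsproj_adj A : A \in sq2 -> adjmx (gsproj A) = gsproj A.
Proof. by case/Q_proj=> _ Qadj _; rewrite /gsproj adjmxB adjmx1 Qadj. Qed.

Lemma supported_on_gsproj A : A \in sq2 -> supported_on A (gsproj A).
Proof.
by case/Q_proj=> _ _ sQ; apply/supported_onD/supported_onN => //; apply: supported_on1.
Qed.

Lemma gsproj_PB_comm A B : A \in sq2 -> gsproj A *m PB Q B = PB Q B *m gsproj A.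
Proof.
move=> SA; rewrite PB_prod.
exact: (commr_prodF gsproj_comm SA (squares_in_sub (B:=B))).
Qed.

Lemma gsproj_PB_absorb A B : A \in sq2 -> A \subset B -> gsproj A *m PB Q B = PB Q B.
Proof.
move=> SA AB; rewrite PB_prod mulmxE.
apply: (mulr_prodF_absorb gsproj_idem gsproj_comm _ (squares_in_sub (B:=B))).
by rewrite mem_filter SA AB mem_index_enum.
Qed.

Lemma PB_subl B B' : B \subset B' -> PB Q B *m PB Q B' = PB Q B'.
Proof.
move=> BB'; rewrite !PB_prod mulmxE.
apply: (mulr_prodF_subl gsproj_idem gsproj_comm _ (squares_in_sub (B:=B'))) => A.
by rewrite !mem_filter => /andP[/andP[-> /subset_trans->]].
Qed.

Lemma PB_subr B B' : B \subset B' -> PB Q B' *m PB Q B = PB Q B'.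
Proof.
move=> BB'; rewrite !PB_prod mulmxE.
apply: (mulr_prodF_subr gsproj_idem gsproj_comm _ (squares_in_sub (B:=B'))) => A.
by rewrite !mem_filter => /andP[/andP[-> /subset_trans->]].
Qed.

Lemma orthoproj_PB B : orthoproj (PB Q B).
Proof.
rewrite PB_prod; split.
  by rewrite mulmxE; exact: (prodF_idem gsproj_idem gsproj_comm (squares_in_sub (B:=B))).
elim: (squares_in B) (squares_in_sub (B:=B)) => [|A s IHs] sS; first by rewrite big_nil adjmx1.
have sS' : {subset s <= sq2} by move=> A' A's; apply: sS; rewrite inE A's orbT.
rewrite big_cons -mulmxE adjmxM IHs // gsproj_adj ?sS ?mem_head //.
by rewrite mulmxE (commr_prodF gsproj_comm _ sS') // sS ?mem_head.
Qed.

Lemma orthoproj_Ptot : orthoproj (Ptot Q).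
Proof. by rewrite Ptot_PB; apply: orthoproj_PB. Qed.

Lemma supported_on_prod_gsproj B s : {subset s <= squares_in B} ->
  supported_on B (\prod_(A <- s) gsproj A).
Proof.
elim: s => [|A s IHs] sB; first by rewrite big_nil; apply: supported_on1.
rewrite big_cons -mulmxE; apply: supported_onM.
  have := sB A (mem_head A s); rewrite mem_filter => /andP[/andP[SA AB] _].
  exact: supported_onS AB (supported_on_gsproj SA).
by apply: IHs => A' A's; apply: sB; rewrite inE A's orbT.
Qed.

Lemma supported_on_PB B : supported_on B (PB Q B).
Proof. by rewrite PB_prod; apply: supported_on_prod_gsproj. Qed.

Lemma PB_mulPtot B : PB Q B *m Ptot Q = Ptot Q.
Proof. by rewrite Ptot_PB PB_subl ?subsetT. Qed.

Lemma Ptot_mulPB B : Ptot Q *m PB Q B = Ptot Q.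
Proof. by rewrite Ptot_PB PB_subr ?subsetT. Qed.

Lemma PB_ball1_sandwich_Ptot (i j : int) (r : nat) (X : 'M[C]_n) :
  supported_on (sq L i j r) X ->
  let Z := PB Q (ball L i j r 1) *m X *m PB Q (ball L i j r 1) in
  Z *m Ptot Q = Ptot Q *m Z *m Ptot Q.
Proof.
move=> sX Z; set B := ball L i j r 1.
rewrite Ptot_PB PB_prod mulmxE.
rewrite (prodF_sandwich gsproj_idem gsproj_comm (inside := fun A => A \subset B)
          (squares_in_sub (B := setT))) //.
  by move=> A /squares_in_sub SA AB; rewrite /Z -!mulmxE !mulmxA gsproj_PB_absorb.
move=> A /squares_in_sub SA AB.
have AX : gsproj A *m X = X *m gsproj A.
  apply: supported_on_disjoint_comm (supported_on_gsproj SA) sX.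
  by apply: contraNT AB; apply: square2_meet_sub_ball1.
rewrite /GRing.comm /Z -!mulmxE !mulmxA gsproj_PB_comm // -(mulmxA _ (gsproj A) X) AX.
by rewrite -!mulmxA gsproj_PB_comm.
Qed.

Lemma TQO2_ball2 (i j : int) (r : nat) (X : 'M[C]_n) :
  TQO2 Lstar Q -> (0 < r)%N -> (r + 2 <= Lstar)%N -> supported_on (sq L i j r) X ->
  Ptot Q *m X *m Ptot Q = 0 ->
  PB Q (ball L i j r 2) *m X *m PB Q (ball L i j r 2) = 0.
Proof.
move=> tqo2 r_gt0 r_le sX PXP; set B := ball L i j r 1; set D := ball L i j r 2.
have BD : B \subset D by rewrite /D -[2%N]/(1 + 1)%N -ball_ball; apply: sq_sub_ball.
have PBD : PB Q B *m PB Q D = PB Q D /\ PB Q D *m PB Q B = PB Q D.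
  by rewrite PB_subl ?PB_subr.
set Z := PB Q B *m X *m PB Q B.
have sZ : supported_on B Z.
  apply: supported_onM; last exact: supported_on_PB.
  apply: supported_onM; first exact: supported_on_PB.
  exact: supported_onS (sq_sub_ball _ _ _ _ _) sX.
have ZP : Z *m Ptot Q = 0.
  rewrite PB_ball1_sandwich_Ptot // /Z !mulmxA Ptot_mulPB -(mulmxA _ (PB Q B)).
  by rewrite PB_mulPtot PXP.
have ZD : Z *m PB Q D = 0.
  rewrite /D -[2%N]/(1 + 1)%N -ball_ball.
  by apply: (tqo2 _ _ _ _ _ Z sZ ZP); rewrite ?addn_gt0 ?r_gt0 ?muln1.
have -> : PB Q D *m X *m PB Q D = PB Q D *m Z *m PB Q D.
  by rewrite /Z !mulmxA (proj2 PBD) -!mulmxA (proj1 PBD).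
by rewrite -mulmxA ZD mulmx0.
Qed.

Lemma TQO1_ball2 (i j : int) (r : nat) (O : 'M[C]_n) :
  TQO1 Lstar Q -> TQO2 Lstar Q -> (0 < r)%N -> (r + 2 <= Lstar)%N ->
  supported_on (sq L i j r) O ->
  exists c : C, Ptot Q *m O *m Ptot Q = c *: Ptot Q
    /\ PB Q (ball L i j r 2) *m O *m PB Q (ball L i j r 2) = c *: PB Q (ball L i j r 2).
Proof.
move=> tqo1 tqo2 r_gt0 r_le sO.
have [c Pc] := tqo1 i j r r_gt0 (leq_trans (leq_addr 2 r) r_le) O sO.
exists c; split => //.
have shift_sandwich P : P *m P = P -> P *m (O - c *: 1%:M) *m P = P *m O *m P - c *: P.
  by move=> PP; rewrite mulmxBr mulmxBl -scalemxAr mulmx1 -scalemxAl PP.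
have PtotP : Ptot Q *m Ptot Q = Ptot Q by rewrite {1}Ptot_PB PB_mulPtot.
apply/eqP; rewrite -subr_eq0 -shift_sandwich; last exact: (orthoproj_PB _).1.
apply/eqP/TQO2_ball2 => //; last by rewrite shift_sandwich // Pc subrr.
exact/supported_onD/supported_onN/supported_onZ/supported_on1.
Qed.

End FrustrationFree.

Theorem corollary1 (C : numClosedFieldType) (L d Lstar : nat)
  (Q : {set site L} -> 'M[C]_(dimH L d)) :
  (0 < L)%N -> (0 < d)%N ->
  (forall A, A \in squares L 2 ->
     [/\ Q A *m Q A = Q A, adjmx (Q A) = Q A & supported_on A (Q A)]) ->
  (forall A B, A \in squares L 2 -> B \in squares L 2 ->
     Q A *m Q B = Q B *m Q A) ->
  Ptot Q != 0 ->
  TQO1 Lstar Q -> TQO2 Lstar Q ->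
  forall (i j : int) (r : nat) (O : 'M[C]_(dimH L d)),
  (0 < r)%N -> (r + 4 <= Lstar)%N ->
  supported_on (sq L i j r) O ->
  [/\ (* (i) *)
      exists c : C, PB Q (ball L i j r 2) *m O *m PB Q (ball L i j r 2)
                    = c *: PB Q (ball L i j r 2),
      (* (ii) *)
      (forall psi phi : 'cV[C]_(dimH L d),
         vnorm2 psi = 1 -> vnorm2 phi = 1 ->
         PB Q (ball L i j r 2) *m psi = psi ->
         PB Q (ball L i j r 2) *m phi = phi ->
         forall x y, rdm (sq L i j r) psi x y = rdm (sq L i j r) phi x y)
      /\
      (forall psi phi : 'cV[C]_(dimH L d),
         vnorm2 psi = 1 -> vnorm2 phi = 1 ->
         PB Q (ball L i j r 2) *m psi = psi ->
         Ptot Q *m phi = phi ->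
         forall x y, rdm (sq L i j r) psi x y = rdm (sq L i j r) phi x y)
    & (* (iii) *)
      exists nrm : C, is_opnorm (O *m Ptot Q) nrm
                      /\ is_opnorm (O *m PB Q (ball L i j r 2)) nrm].
Proof.
move=> L_gt0 _ Q_proj Q_comm P_neq0 tqo1 tqo2 i j r O r_gt0 r_le sO.
have r2_le : (r + 2 <= Lstar)%N by apply: leq_trans r_le; rewrite leq_add2l.
have local_tqo1 := TQO1_ball2 L_gt0 Q_proj Q_comm tqo1 tqo2 r_gt0 r2_le.
set PC := PB Q (ball L i j r 2).
have PCproj : orthoproj PC := orthoproj_PB Q_proj Q_comm _.
have PC_Ptot phi : Ptot Q *m phi = phi -> PC *m phi = phi.
  by move=> <-; rewrite mulmxA PB_mulPtot.
have rdm_const x y : exists c, forall psi, vnorm2 psi = 1 -> PC *m psi = psi ->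
    rdm (sq L i j r) psi x y = c.
  have [c [_ PCc]] := local_tqo1 i j _ (supported_on_rdm_op C (sq L i j r) x y).
  exists c => psi psi1 PCpsi.
  by rewrite rdm_expectation (orthoproj_expectation PCproj PCc) ?psi1 ?mulr1.
split.
- by have [c [_ PCc]] := local_tqo1 i j _ sO; exists c.
- split=> psi phi psi1 phi1 PCpsi PCphi x y; have [c rdmc] := rdm_const x y.
    by rewrite (rdmc psi) // (rdmc phi).
  by rewrite (rdmc psi) // (rdmc phi) // PC_Ptot.
have [c [Pc PCc]] := local_tqo1 i j _ (supported_onM (supported_on_adj sO) sO).
exists (sqrtC c); split.
  exact: opnorm_orthoproj (orthoproj_Ptot Q_proj Q_comm) P_neq0 Pc.
apply: opnorm_orthoproj PCproj _ PCc.
apply: contraNneq P_neq0 => PC0.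
by rewrite -(PB_mulPtot Q_proj Q_comm (ball L i j r 2)) -/PC PC0 mul0mx.
Qed.
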